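(* Let $q\in\mathbb{C}$, $|q|<1$, $\mathbf{s}=(s_1,\dots,s_d)\in\mathbb{N}^d$ and $\mathbf{a}=(a_1,\dots,a_d)\in\mathbb{Z}_{\ge0}^d$ with $a_j\le s_j$ for all $j$, and put $w=s_1+\dots+s_d$. Let $$G(t)=\mathbf{R}^{s_1-a_1}\Big[\mathbf{P}^{a_1}\big[\mathbf{y}\,\mathbf{R}^{s_2-a_2}[\mathbf{P}^{a_2}[\mathbf{y}\cdots\mathbf{R}^{s_d-a_d}[\mathbf{P}^{a_d}[\mathbf{y}]]\cdots]]\big]\Big](t).$$ If $s_1+\dots+s_j>a_1+\dots+a_j$ for all $j=1,\dots,d$, then $\zeta_q^{\mathbf{s}-\mathbf{a}}[\mathbf{s}]=(1-q)^wG(1)$ and $\mathfrak{z}_q^{\mathbf{s}-\mathbf{a}}[\mathbf{s}]=G(1)$, where $\mathbf{s}-\mathbf{a}=(s_1-a_1,\dots,s_d-a_d)$.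
   Context: $\mathfrak{z}_q^{\mathbf{t}}[\mathbf{s}]=\sum_{k_1>\dots>k_d>0}\prod_{j}\frac{q^{k_jt_j}}{(1-q^{k_j})^{s_j}}$ and $\zeta_q^{\mathbf{t}}[\mathbf{s}]=(1-q)^{|\mathbf{s}|}\mathfrak{z}_q^{\mathbf{t}}[\mathbf{s}]$. Operators on power series $f(t)$ without constant term in $t$: $\mathbf{P}[f](t)=\sum_{k\ge0}f(q^kt)$, $\mathbf{R}[f](t)=\sum_{k\ge1}f(q^kt)$, with $n$-fold compositions $\mathbf{P}^n,\mathbf{R}^n$; $\mathbf{y}$ denotes multiplication by $\mathbf{y}(t)=\frac{t}{1-t}$ (the innermost $\mathbf{y}$ being the function itself). $G(1)$ is the value at $t=1$. *)

From Stdlib Require Import Reals List Arith.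
From Coquelicot Require Import Coquelicot.
Import ListNotations.
Open Scope C_scope.

(* Value of an infinite series of complex numbers sum_{n>=0} a n,
   taken componentwise via Coquelicot's Series (the limit of partial sums
   when it exists). *)
Definition Csum (a : nat -> C) : C :=
  (Series (fun n => Re (a n)), Series (fun n => Im (a n))).

Fixpoint fsum (n : nat) (f : nat -> C) : C :=
  match n with
  | O => 0
  | S m => fsum m f + f m
  end.

Fixpoint opiter (n : nat) (O : (C -> C) -> (C -> C)) (f : C -> C) : C -> C :=
  match n with
  | O => f
  | S m => O (opiter m O f)
  end.

Definition opP (q : C) (f : C -> C) : C -> C :=
  fun t => Csum (fun k => f (q ^ k * t)).

Definition opR (q : C) (f : C -> C) : C -> C :=
  fun t => Csum (fun k => f (q ^ (S k) * t)).

Definition yfun (t : C) : C := t / (1 - t).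

(* For a list of pairs [(s_1,a_1);...;(s_d,a_d)]:
   Gfun [] = 1 (so that the innermost  y * Gfun [] = y), and
   Gfun ((s,a)::rest) = R^(s-a) [ P^a [ y * Gfun rest ] ]. *)
Fixpoint Gfun (q : C) (sa : list (nat * nat)) : C -> C :=
  match sa with
  | [] => fun _ => 1
  | (s, a) :: rest =>
      opiter (s - a) (opR q) (opiter a (opP q) (fun t => yfun t * Gfun q rest t))
  end.

Definition zterm (q : C) (k t s : nat) : C := q ^ (k * t) / (1 - q ^ k) ^ s.

(* finite part: sum over m > k_1 > ... > k_r > 0 of prod_j zterm k_j t_j s_j,
   for ts = [(t_1,s_1);...;(t_r,s_r)] *)
Fixpoint zfin (q : C) (m : nat) (ts : list (nat * nat)) : C :=
  match ts with
  | [] => 1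
  | (t, s) :: rest =>
      fsum (Nat.pred m) (fun i => zterm q (S i) t s * zfin q (S i) rest)
  end.

(* frak z_q^t[s] = sum_{k_1 > ... > k_d > 0} prod_j q^(k_j t_j)/(1-q^(k_j))^(s_j),
   summed as a series in k_1 (the inner sums being finite). *)
Definition zfrak_pairs (q : C) (ts : list (nat * nat)) : C :=
  match ts with
  | [] => 1
  | (t, s) :: rest => Csum (fun n => zterm q (S n) t s * zfin q (S n) rest)
  end.

Definition zfrak (q : C) (t s : list nat) : C := zfrak_pairs q (combine t s).

Definition sumnat (l : list nat) : nat := fold_right Nat.add 0%nat l.

Definition zetaq (q : C) (t s : list nat) : C := (1 - q) ^ (sumnat s) * zfrak q t s.

Definition subl (s a : list nat) : list nat := map (fun p => (fst p - snd p)%nat) (combine s a).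

From Stdlib Require Import Reals List Lia Lra.
From Coquelicot Require Import Coquelicot.
Import ListNotations.
Open Scope C_scope.

(* Write [f(t) = sum_n b_n t^n]. Each operator acts diagonally on the
   coefficients: [y f] has coefficients [sum_(m<n) b_m], and when [b_0 = 0],
   [P f] has [b_n / (1 - q^n)] (sum the geometric series [sum_k b_n q^(k n)])
   and [R f] has [b_n q^n / (1 - q^n)]. Unfolding [G], its [n]-th coefficient is
   the sum over [n = k_1 > k_2 > ... > k_d > 0] of the products of
   [q^(k_j (s_j - a_j)) / (1 - q^k_j)^s_j]. As [s_1 > a_1] the outermost operator
   is an [R], and [R f(1) = P f(q)] is a power series evaluated inside the unit
   disc, so [G(1)] is the sum of these coefficients over [n]. *)

Definition is_Cseries (a : nat -> C) (l : C) : Prop :=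
  @is_series C_AbsRing C_NormedModule a l.

Lemma sum_n_fsum (a : nat -> C) N : @sum_n C_AbelianMonoid a N = fsum (S N) a.
Proof.
  induction N as [|N IH].
  - rewrite sum_O. simpl. unfold plus; simpl. ring.
  - unfold sum_n in *. rewrite sum_n_Sm, IH by lia. reflexivity.
Qed.

(* The uniform structure of [C] is the product one, so a ball around [l]
   is a ball in each coordinate. *)
Lemma is_series_Cproj (proj : C -> R) a l :
  proj = fst \/ proj = snd ->
  is_Cseries a l -> is_series (fun n => proj (a n)) (proj l).
Proof.
  intros Hproj Ha.
  assert (Hsum : forall N, sum_n (fun n => proj (a n)) N
                           = proj (@sum_n C_AbelianMonoid a N)).
  { induction N as [|N IH].
    - now rewrite !sum_O.
    - unfold sum_n in *. rewrite !sum_n_Sm, IH by lia.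
      destruct Hproj; subst; reflexivity. }
  apply (filterlim_locally (F := eventually)). intro eps.
  destruct (proj1 (filterlim_locally (F := eventually) _ _) Ha eps) as [M HM].
  exists M. intros n Hn. rewrite Hsum.
  destruct (HM n Hn) as [Hre Him]. destruct Hproj; subst; assumption.
Qed.

Lemma Csum_unique a l : is_Cseries a l -> Csum a = l.
Proof.
  intro Ha. unfold Csum, Re, Im.
  rewrite (is_series_unique _ _ (is_series_Cproj fst a l (or_introl eq_refl) Ha)).
  rewrite (is_series_unique _ _ (is_series_Cproj snd a l (or_intror eq_refl) Ha)).
  now destruct l.
Qed.

Lemma Csum_ext a b : (forall n, a n = b n) -> Csum a = Csum b.
Proof.
  intro Eab. unfold Csum.
  rewrite (Series_ext (fun n => Re (a n)) (fun n => Re (b n))),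
          (Series_ext (fun n => Im (a n)) (fun n => Im (b n))); auto;
    intro n; now rewrite Eab.
Qed.

Lemma is_Cseries_ext a b l : (forall n, a n = b n) -> is_Cseries a l -> is_Cseries b l.
Proof. apply is_series_ext. Qed.

Lemma is_Cseries_plus a b la lb :
  is_Cseries a la -> is_Cseries b lb -> is_Cseries (fun n => a n + b n) (la + lb).
Proof. intros Ha Hb. exact (is_series_plus _ _ _ _ Ha Hb). Qed.

Lemma is_Cseries_scal c a l : is_Cseries a l -> is_Cseries (fun n => c * a n) (c * l).
Proof. intro Ha. exact (is_series_scal c _ _ Ha). Qed.

Lemma is_Cseries_minus a b la lb :
  is_Cseries a la -> is_Cseries b lb -> is_Cseries (fun n => a n - b n) (la - lb).
Proof. intros Ha Hb. exact (is_series_minus _ _ _ _ Ha Hb). Qed.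

Lemma ex_Cseries_Cmod a : ex_series (fun n => Cmod (a n)) -> exists l, is_Cseries a l.
Proof.
  intro Habs.
  destruct (ex_series_le (V := C_CompleteNormedModule) a _ (fun n => Rle_refl _) Habs)
    as [l Hl].
  now exists l.
Qed.

Lemma is_Cseries_error_bound a l (e : nat -> R) :
  (forall N, (Cmod (fsum (S N) a - l) <= e N)%R) -> is_lim_seq e 0%R -> is_Cseries a l.
Proof.
  intros Hbound He. unfold is_Cseries, is_series.
  apply (filterlim_locally (F := eventually)). intro eps.
  destruct (proj1 (filterlim_locally (F := eventually) _ _) He eps) as [M HM].
  exists M. intros n Hn. apply norm_compat1.
  specialize (HM n Hn).
  change (Rabs (e n - 0) < eps)%R in HM.
  change (Cmod (@sum_n C_AbelianMonoid a n - l) < eps)%R.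
  rewrite sum_n_fsum. rewrite Rminus_0_r in HM.
  eapply Rle_lt_trans; [apply Hbound|]. eapply Rle_lt_trans; [apply Rle_abs|exact HM].
Qed.

Lemma is_Cseries_Cmod_le a l (b : nat -> R) lb :
  is_Cseries a l -> (forall n, Cmod (a n) <= b n)%R -> is_series b lb -> (Cmod l <= lb)%R.
Proof.
  intros Ha Hab Hb.
  assert (Hpartial : forall N, (Cmod (fsum (S N) a) <= sum_n b N)%R).
  { induction N as [|N IH].
    - rewrite sum_O. simpl. rewrite Cplus_0_l. apply Hab.
    - unfold sum_n in *. rewrite sum_n_Sm by lia. unfold plus; simpl.
      eapply Rle_trans; [apply Cmod_triangle|]. simpl in IH. specialize (Hab (S N)). lra. }
  apply (is_lim_seq_le (fun N => Cmod (@sum_n C_AbelianMonoid a N)) (sum_n b) (Cmod l) lb).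
  - intro N. rewrite sum_n_fsum. apply Hpartial.
  - eapply filterlim_comp; [exact Ha|].
    exact (filterlim_norm (K := C_AbsRing) (V := C_NormedModule) l).
  - exact Hb.
Qed.

Lemma sum_n_le_Series (a : nat -> R) N :
  (forall n, 0 <= a n)%R -> ex_series a -> (sum_n a N <= Series a)%R.
Proof.
  intros Hpos Hex.
  assert (Hlim : is_lim_seq (fun n => sum_n a (n + N)) (Series a)).
  { apply (is_lim_seq_incr_n (sum_n a) N). apply Series_correct, Hex. }
  apply (is_lim_seq_le (fun _ => sum_n a N) (fun n => sum_n a (n + N)) (sum_n a N) (Series a));
    [intro n|apply is_lim_seq_const|exact Hlim].
  induction n as [|n IH]; [simpl; lra|].
  simpl. unfold sum_n in *. rewrite sum_n_Sm by lia. unfold plus; simpl.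
  specialize (Hpos (S (n + N))). lra.
Qed.

Lemma Cmod_pow_le_1 (z : C) n : (Cmod z <= 1)%R -> (Cmod (z ^ n) <= 1)%R.
Proof.
  intro Hz. rewrite Cmod_pow, <- (pow1 n). apply pow_incr. split; [apply Cmod_ge_0|exact Hz].
Qed.

Lemma Cmod_pow_le_Cmod (z : C) n :
  (Cmod z <= 1)%R -> (0 < n)%nat -> (Cmod (z ^ n) <= Cmod z)%R.
Proof.
  intros Hz Hn. destruct n as [|n]; [lia|].
  simpl. rewrite Cmod_mult. pose proof (Cmod_pow_le_1 z n Hz). pose proof (Cmod_ge_0 z).
  pose proof (Cmod_ge_0 (z ^ n)). nra.
Qed.

Lemma one_minus_neq0 (z : C) : (Cmod z < 1)%R -> 1 - z <> 0.
Proof.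
  intros Hz E. replace z with (RtoC 1) in Hz by (rewrite <- (Cplus_0_r z), <- E; ring).
  rewrite Cmod_1 in Hz. lra.
Qed.

Lemma Cmod_inv_one_minus_le (z : C) :
  (Cmod z < 1)%R -> (Cmod (/ (1 - z)) <= / (1 - Cmod z))%R.
Proof.
  intro Hz. rewrite Cmod_inv by now apply one_minus_neq0.
  apply Rinv_le_contravar; [lra|].
  pose proof (Cmod_triangle (1 - z) z) as Htri.
  replace (1 - z + z) with (RtoC 1) in Htri by ring. rewrite Cmod_1 in Htri. lra.
Qed.

Lemma fsum_ext (f g : nat -> C) m : (forall i, (i < m)%nat -> f i = g i) -> fsum m f = fsum m g.
Proof.
  induction m as [|m IH]; intro Hfg; simpl; [reflexivity|].
  rewrite IH, Hfg; [reflexivity|lia|intros i Hi; apply Hfg; lia].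
Qed.

Lemma fsum_shift (f : nat -> C) m : fsum (S m) f = f 0%nat + fsum m (fun i => f (S i)).
Proof. induction m as [|m IH]; [simpl; ring|]. simpl in *. rewrite IH. ring. Qed.

Lemma fsum_geom_tail (x : C) M : 1 - x <> 0 ->
  / (1 - x) - fsum M (fun k => x ^ k) = x ^ M / (1 - x).
Proof.
  intro Hx. induction M as [|M IH]; simpl; [field; exact Hx|].
  replace (/ (1 - x) - (fsum M (fun k => x ^ k) + x ^ M))
    with (/ (1 - x) - fsum M (fun k => x ^ k) - x ^ M) by ring.
  rewrite IH. field. exact Hx.
Qed.

Lemma Cmod_fsum_pow_le (b : nat -> C) (s : R) n : (0 <= s <= 1)%R ->
  (Cmod (fsum (S n) b) * s ^ n <= sum_n (fun m => Cmod (b m) * s ^ m) n)%R.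
Proof.
  intro Hs. induction n as [|n IH].
  - rewrite sum_O. simpl. rewrite Cplus_0_l. lra.
  - unfold sum_n in *. rewrite sum_n_Sm by lia. unfold plus; simpl.
    change (fsum (S (S n)) b) with (fsum (S n) b + b (S n)).
    pose proof (Cmod_triangle (fsum (S n) b) (b (S n))) as Htri.
    pose proof (pow_le s n (proj1 Hs)). pose proof (Cmod_ge_0 (fsum (S n) b)).
    pose proof (Cmod_ge_0 (b (S n))).
    assert (Hss : (0 <= s * s ^ n)%R) by nra.
    assert (Cmod (fsum (S n) b) * (s * s ^ n) <= Cmod (fsum (S n) b) * s ^ n)%R
      by (apply Rmult_le_compat_l; nra).
    apply (Rmult_le_compat_r _ _ _ Hss) in Htri.
    simpl in *. nra.
Qed.

(* Absolute convergence on smaller discs is part of the invariant so that it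
   propagates through the operators. *)
Definition pseries_on_disc (f : C -> C) (b : nat -> C) : Prop :=
  (forall t, (Cmod t < 1)%R -> is_Cseries (fun n => b n * t ^ n) (f t)) /\
  (forall r, (0 <= r < 1)%R -> ex_series (fun n => Cmod (b n) * r ^ n)%R).

Lemma pseries_on_disc_ext f g b c :
  (forall t, f t = g t) -> (forall n, b n = c n) ->
  pseries_on_disc f b -> pseries_on_disc g c.
Proof.
  intros Efg Ebc [Hval Habs]. split.
  - intros t Ht. rewrite <- Efg.
    apply (is_Cseries_ext (fun n => b n * t ^ n)); [intro n; now rewrite Ebc|auto].
  - intros r Hr. apply (ex_series_ext (fun n => Cmod (b n) * r ^ n)%R);
      [intro n; now rewrite Ebc|auto].
Qed.

Definition coef_one (n : nat) : C := match n with O => 1 | S _ => 0 end.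

Lemma pseries_on_disc_one : pseries_on_disc (fun _ => 1) coef_one.
Proof.
  split.
  - intros t Ht. apply is_Cseries_error_bound with (e := fun _ => 0%R);
      [|apply is_lim_seq_const].
    intro N. replace (fsum (S N) (fun n => coef_one n * t ^ n)) with (RtoC 1).
    + replace (RtoC 1 - RtoC 1) with (RtoC 0) by ring. rewrite Cmod_0. lra.
    + induction N as [|N IH]; simpl in *; rewrite <- ?IH; ring.
  - intros r Hr. apply (ex_series_le (V := R_CompleteNormedModule) _ (fun n => r ^ n)%R).
    + intro n. change (Rabs (Cmod (coef_one n) * r ^ n) <= r ^ n)%R.
      pose proof (pow_le r n (proj1 Hr)).
      destruct n; simpl; [rewrite Cmod_1|rewrite Cmod_0];
        rewrite Rabs_right; simpl in *; nra.
    + apply ex_series_geom. rewrite Rabs_right; lra.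
Qed.

(* Comparison with a geometric series of ratio [sqrt r]: the partial sums of
   [b] grow at most like [sqrt r ^ -n]. *)
Lemma ex_series_fsum_Cmod (b : nat -> C) r :
  (0 <= r < 1)%R -> ex_series (fun n => Cmod (b n) * sqrt r ^ n)%R ->
  ex_series (fun n => Cmod (fsum n b) * r ^ n)%R.
Proof.
  intros Hr Hex. set (s := sqrt r).
  assert (Hs : (0 <= s < 1)%R).
  { split; [apply sqrt_pos|]. unfold s. rewrite <- sqrt_1. apply sqrt_lt_1_alt. lra. }
  assert (Hss : (s * s = r)%R) by (apply sqrt_sqrt; lra).
  set (S0 := Series (fun m => Cmod (b m) * s ^ m)%R).
  assert (Hpos : forall m, (0 <= Cmod (b m) * s ^ m)%R).
  { intro m. apply Rmult_le_pos; [apply Cmod_ge_0|apply pow_le; lra]. }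
  assert (HS0 : forall N, (sum_n (fun m => Cmod (b m) * s ^ m) N <= S0)%R)
    by (intro N; apply sum_n_le_Series; auto).
  assert (Hbound : forall n, (Cmod (fsum n b) * s ^ n <= S0)%R).
  { intros [|n].
    - specialize (HS0 0%nat). rewrite sum_O in HS0. specialize (Hpos 0%nat).
      simpl. rewrite Cmod_0. lra.
    - eapply Rle_trans; [|apply (HS0 n)]. eapply Rle_trans; [|apply Cmod_fsum_pow_le; lra].
      simpl. pose proof (pow_le s n (proj1 Hs)). pose proof (Cmod_ge_0 (fsum (S n) b)).
      apply Rmult_le_compat_l; [auto|]. nra. }
  apply (ex_series_le (V := R_CompleteNormedModule) _ (fun n => S0 * s ^ n)%R).
  - intro n. change (Rabs (Cmod (fsum n b) * r ^ n) <= S0 * s ^ n)%R.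
    pose proof (pow_le s n (proj1 Hs)). pose proof (Cmod_ge_0 (fsum n b)).
    rewrite Rabs_right by (apply Rle_ge, Rmult_le_pos; [auto|apply pow_le; lra]).
    rewrite <- Hss, Rpow_mult_distr, <- Rmult_assoc.
    apply Rmult_le_compat_r; auto.
  - apply (ex_series_scal_l (V := R_NormedModule) S0). apply ex_series_geom.
    rewrite Rabs_right; lra.
Qed.

(* [y(t) f(t) = L] where [L] is the series of partial sums: [L - t L = t f(t)]. *)
Lemma pseries_on_disc_yfun f b :
  pseries_on_disc f b -> pseries_on_disc (fun t => yfun t * f t) (fun n => fsum n b).
Proof.
  intros [Hval Habs].
  assert (Habs' : forall r, (0 <= r < 1)%R -> ex_series (fun n => Cmod (fsum n b) * r ^ n)%R).
  { intros r Hr. apply ex_series_fsum_Cmod; auto. apply Habs.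
    split; [apply sqrt_pos|]. rewrite <- sqrt_1. apply sqrt_lt_1_alt. lra. }
  split; [|exact Habs'].
  intros t Ht.
  destruct (ex_Cseries_Cmod (fun n => fsum n b * t ^ n)) as [L HL].
  { apply (ex_series_ext (fun n => Cmod (fsum n b) * Cmod t ^ n)%R).
    - intro n. now rewrite Cmod_mult, Cmod_pow.
    - apply Habs'. split; [apply Cmod_ge_0|lra]. }
  assert (Hshift : is_Cseries (fun n => fsum (S n) b * t ^ S n) L).
  { apply (is_series_incr_1 (V := C_NormedModule) (fun n => fsum n b * t ^ n)).
    change (is_Cseries (fun n => fsum n b * t ^ n) (L + fsum 0 b * t ^ 0)).
    simpl. now rewrite Cmult_0_l, Cplus_0_r. }
  assert (HL_tL : L - t * L = t * f t).
  { rewrite <- (Csum_unique _ _ (is_Cseries_minus _ _ _ _ Hshift (is_Cseries_scal t _ _ HL))).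
    apply Csum_unique. apply (is_Cseries_ext (fun n => t * (b n * t ^ n))).
    - intro n. simpl. ring.
    - apply is_Cseries_scal, Hval, Ht. }
  replace (yfun t * f t) with L; [exact HL|].
  pose proof (one_minus_neq0 t Ht). unfold yfun.
  replace (t / (1 - t) * f t) with (t * f t / (1 - t)) by (field; auto).
  rewrite <- HL_tL. field. auto.
Qed.

Lemma pseries_on_disc_dilate f b (c : C) : (Cmod c <= 1)%R ->
  pseries_on_disc f b -> pseries_on_disc (fun t => f (c * t)) (fun n => b n * c ^ n).
Proof.
  intros Hc [Hval Habs]. split.
  - intros t Ht.
    assert (Hct : (Cmod (c * t) < 1)%R).
    { rewrite Cmod_mult. pose proof (Cmod_ge_0 c). pose proof (Cmod_ge_0 t). nra. }
    apply (is_Cseries_ext (fun n => b n * (c * t) ^ n)); [|exact (Hval _ Hct)].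
    intro n. rewrite Cpow_mult_l. ring.
  - intros r Hr.
    apply (ex_series_le (V := R_CompleteNormedModule) _ (fun n => Cmod (b n) * r ^ n)%R);
      [|exact (Habs r Hr)].
    intro n. change (Rabs (Cmod (b n * c ^ n) * r ^ n) <= Cmod (b n) * r ^ n)%R.
    rewrite Cmod_mult. pose proof (Cmod_pow_le_1 c n Hc).
    pose proof (pow_le r n (proj1 Hr)). pose proof (Cmod_ge_0 (b n)).
    pose proof (Cmod_ge_0 (c ^ n)).
    rewrite Rabs_right by (apply Rle_ge; repeat apply Rmult_le_pos; auto).
    apply Rmult_le_compat_r; [auto|]. nra.
Qed.

Lemma pseries_on_disc_opiter (O : (C -> C) -> C -> C) (m : nat -> C) :
  (forall f b, pseries_on_disc f b -> b 0%nat = 0 ->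
     pseries_on_disc (O f) (fun n => b n * m n)) ->
  forall k f b, pseries_on_disc f b -> b 0%nat = 0 ->
  pseries_on_disc (opiter k O f) (fun n => b n * m n ^ k).
Proof.
  intros HO k. induction k as [|k IH]; intros f b Hf Hb0; simpl.
  - apply (pseries_on_disc_ext f f b); auto. intro n. ring.
  - apply (pseries_on_disc_ext (O (opiter k O f)) _ (fun n => b n * m n ^ k * m n)); auto.
    + intro n. ring.
    + apply HO; [apply IH; auto|]. rewrite Hb0. ring.
Qed.

Section QOperators.
Variable q : C.
Hypothesis Hq : (Cmod q < 1)%R.

Lemma one_minus_qpow_neq0 n : (0 < n)%nat -> 1 - q ^ n <> 0.
Proof.
  intro Hn. apply one_minus_neq0. pose proof (Cmod_pow_le_Cmod q n ltac:(lra) Hn). lra.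
Qed.

Lemma Cmod_div_one_minus_qpow_le (b : nat -> C) M n : b 0%nat = 0 ->
  (Cmod (b n * / (1 - q ^ n) * (q ^ n) ^ M) <= / (1 - Cmod q) * Cmod (b n) * Cmod q ^ M)%R.
Proof.
  intro Hb0. destruct n as [|n].
  - rewrite Hb0, !Cmult_0_l, Cmod_0. lra.
  - assert (Hqn : (Cmod (q ^ S n) <= Cmod q)%R) by (apply Cmod_pow_le_Cmod; [lra|lia]).
    assert (Hinv : (Cmod (/ (1 - q ^ S n)) <= / (1 - Cmod q))%R).
    { eapply Rle_trans; [apply Cmod_inv_one_minus_le; lra|].
      apply Rinv_le_contravar; lra. }
    assert (HqM : (Cmod ((q ^ S n) ^ M) <= Cmod q ^ M)%R).
    { rewrite Cmod_pow. apply pow_incr. split; [apply Cmod_ge_0|exact Hqn]. }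
    rewrite !Cmod_mult.
    pose proof (Cmod_ge_0 (b (S n))). pose proof (Cmod_ge_0 (/ (1 - q ^ S n))).
    pose proof (Cmod_ge_0 ((q ^ S n) ^ M)).
    replace (/ (1 - Cmod q) * Cmod (b (S n)) * Cmod q ^ M)%R
      with (Cmod (b (S n)) * / (1 - Cmod q) * Cmod q ^ M)%R by ring.
    apply Rmult_le_compat; [nra|auto|apply Rmult_le_compat_l; auto|auto].
Qed.

Lemma is_Cseries_fsum_opP f b t N : pseries_on_disc f b -> (Cmod t < 1)%R ->
  is_Cseries (fun n => b n * t ^ n * fsum N (fun k => (q ^ n) ^ k))
             (fsum N (fun k => f (q ^ k * t))).
Proof.
  intros [Hval _] Ht. induction N as [|N IH]; simpl.
  - apply (is_Cseries_ext (fun n => 0 * (b n * t ^ n))); [intro n; ring|].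
    pose proof (is_Cseries_scal 0 _ _ (Hval t Ht)) as H0. rewrite Cmult_0_l in H0. exact H0.
  - assert (HqNt : (Cmod (q ^ N * t) < 1)%R).
    { rewrite Cmod_mult. pose proof (Cmod_pow_le_1 q N ltac:(lra)).
      pose proof (Cmod_ge_0 (q ^ N)). pose proof (Cmod_ge_0 t). nra. }
    eapply is_Cseries_ext; [|apply (is_Cseries_plus _ _ _ _ IH (Hval _ HqNt))].
    intro n. simpl. rewrite Cpow_mult_l, <- !Cpow_mult_r, Nat.mul_comm. ring.
Qed.

(* Interchange of the sums over [k] and [n]: the remainder after [N] terms in [k]
   is the series of [b_n t^n q^(n N) / (1 - q^n)], of modulus [O(|q|^N)]. *)
Lemma is_Cseries_opP f b t : pseries_on_disc f b -> b 0%nat = 0 -> (Cmod t < 1)%R ->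
  is_Cseries (fun n => b n * / (1 - q ^ n) * t ^ n) (opP q f t).
Proof.
  intros Hf Hb0 Ht. pose proof (proj2 Hf) as Habs.
  set (K := (/ (1 - Cmod q))%R).
  assert (Ht' : (0 <= Cmod t < 1)%R) by (split; [apply Cmod_ge_0|lra]).
  set (S0 := Series (fun n => Cmod (b n) * Cmod t ^ n)%R).
  assert (HS0 : is_series (fun n => Cmod (b n) * Cmod t ^ n)%R S0)
    by (apply Series_correct, Habs, Ht').
  assert (Hmaj : forall M n, (Cmod (b n * / (1 - q ^ n) * (q ^ n) ^ M * t ^ n)
                              <= Cmod q ^ M * (K * (Cmod (b n) * Cmod t ^ n)))%R).
  { intros M n. rewrite Cmod_mult, Cmod_pow.
    pose proof (Cmod_div_one_minus_qpow_le b M n Hb0) as Hcoef.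
    pose proof (pow_le _ n (proj1 Ht')).
    fold K in Hcoef. apply (Rmult_le_compat_r (Cmod t ^ n)) in Hcoef; [|auto]. nra. }
  destruct (ex_Cseries_Cmod (fun n => b n * / (1 - q ^ n) * t ^ n)) as [L HL].
  { apply (ex_series_le (V := R_CompleteNormedModule) _
             (fun n => Cmod q ^ 0 * (K * (Cmod (b n) * Cmod t ^ n)))%R).
    - intro n. change (Rabs (Cmod (b n * / (1 - q ^ n) * t ^ n))
                       <= Cmod q ^ 0 * (K * (Cmod (b n) * Cmod t ^ n)))%R.
      rewrite Rabs_right by apply Rle_ge, Cmod_ge_0.
      specialize (Hmaj 0%nat n). simpl in Hmaj |- *. rewrite Cmult_1_r in Hmaj. exact Hmaj.
    - apply (ex_series_scal_l (V := R_NormedModule)), (ex_series_scal_l (V := R_NormedModule)).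
      exists S0. exact HS0. }
  assert (Htail : forall N, is_Cseries (fun n => b n * / (1 - q ^ n) * (q ^ n) ^ N * t ^ n)
                                       (L - fsum N (fun k => f (q ^ k * t)))).
  { intro N. eapply is_Cseries_ext;
      [|exact (is_Cseries_minus _ _ _ _ HL (is_Cseries_fsum_opP f b t N Hf Ht))].
    intros [|n]; [rewrite Hb0; ring|].
    pose proof (fsum_geom_tail (q ^ S n) N (one_minus_qpow_neq0 (S n) ltac:(lia))) as Hgeom.
    replace (b (S n) * / (1 - q ^ S n) * t ^ S n
             - b (S n) * t ^ S n * fsum N (fun k => (q ^ S n) ^ k))
      with (b (S n) * t ^ S n * (/ (1 - q ^ S n) - fsum N (fun k => (q ^ S n) ^ k))) by ring.
    rewrite Hgeom. unfold Cdiv. ring. }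
  assert (HP : is_Cseries (fun k => f (q ^ k * t)) L).
  { apply is_Cseries_error_bound with (e := fun N => (Cmod q ^ S N * (K * S0))%R).
    - intro N. rewrite <- Cmod_opp.
      replace (- (fsum (S N) (fun k => f (q ^ k * t)) - L))
        with (L - fsum (S N) (fun k => f (q ^ k * t))) by ring.
      apply (is_Cseries_Cmod_le _ _ _ _ (Htail (S N)) (Hmaj (S N))).
      apply (is_series_scal_l (V := R_NormedModule)), (is_series_scal_l (V := R_NormedModule)).
      exact HS0.
    - replace 0%R with (0 * (K * S0))%R by ring.
      apply (is_lim_seq_scal_r (fun N => Cmod q ^ S N)%R (K * S0) 0%R).
      apply (is_lim_seq_incr_1 (fun N => Cmod q ^ N)%R), is_lim_seq_geom.
      rewrite Rabs_right by apply Rle_ge, Cmod_ge_0. exact Hq. }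
  unfold opP. rewrite (Csum_unique _ _ HP). exact HL.
Qed.

Lemma pseries_on_disc_opP f b : pseries_on_disc f b -> b 0%nat = 0 ->
  pseries_on_disc (opP q f) (fun n => b n * / (1 - q ^ n)).
Proof.
  intros Hf Hb0. split.
  - intros t Ht. apply (is_Cseries_opP f b t Hf Hb0 Ht).
  - intros r Hr. apply (ex_series_le (V := R_CompleteNormedModule) _
                          (fun n => / (1 - Cmod q) * Cmod (b n) * r ^ n)%R).
    + intro n. change (Rabs (Cmod (b n * / (1 - q ^ n)) * r ^ n)
                       <= / (1 - Cmod q) * Cmod (b n) * r ^ n)%R.
      pose proof (Cmod_div_one_minus_qpow_le b 0 n Hb0) as Hcoef. simpl in Hcoef.
      rewrite Cmult_1_r, Rmult_1_r in Hcoef.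
      pose proof (pow_le r n (proj1 Hr)).
      rewrite Rabs_right by (apply Rle_ge, Rmult_le_pos; [apply Cmod_ge_0|auto]).
      apply Rmult_le_compat_r; auto.
    + apply (ex_series_ext (fun n => / (1 - Cmod q) * (Cmod (b n) * r ^ n))%R);
        [intro n; symmetry; apply Rmult_assoc|].
      apply (ex_series_scal_l (V := R_NormedModule)), (proj2 Hf), Hr.
Qed.

Lemma opR_opP f t : opR q f t = opP q f (q * t).
Proof. unfold opR, opP. apply Csum_ext. intro k. simpl. f_equal. ring. Qed.

Lemma pseries_on_disc_opR f b : pseries_on_disc f b -> b 0%nat = 0 ->
  pseries_on_disc (opR q f) (fun n => b n * (q ^ n * / (1 - q ^ n))).
Proof.
  intros Hf Hb0.
  apply (pseries_on_disc_ext (fun t => opP q f (q * t)) _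
                             (fun n => b n * / (1 - q ^ n) * q ^ n)).
  - intro t. symmetry. apply opR_opP.
  - intro n. ring.
  - apply pseries_on_disc_dilate; [lra|]. apply pseries_on_disc_opP; auto.
Qed.

Lemma is_Cseries_opR_1 f b : pseries_on_disc f b -> b 0%nat = 0 ->
  is_Cseries (fun n => b n * (q ^ n * / (1 - q ^ n))) (opR q f 1).
Proof.
  intros Hf Hb0. rewrite opR_opP.
  apply (is_Cseries_ext (fun n => b n * / (1 - q ^ n) * (q * 1) ^ n)).
  - intro n. rewrite Cmult_1_r. ring.
  - apply is_Cseries_opP; auto. now rewrite Cmult_1_r.
Qed.

End QOperators.

Fixpoint Gcoef (q : C) (L : list (nat * nat)) : nat -> C :=
  match L with
  | [] => coef_one
  | (s, a) :: L' => fun n =>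
      fsum n (Gcoef q L') * (/ (1 - q ^ n)) ^ a * (q ^ n * / (1 - q ^ n)) ^ (s - a)
  end.

Lemma Gcoef_cons_0 q s a L : Gcoef q ((s, a) :: L) 0%nat = 0.
Proof. simpl. ring. Qed.

Lemma pseries_on_disc_Gfun q L : (Cmod q < 1)%R -> pseries_on_disc (Gfun q L) (Gcoef q L).
Proof.
  intro Hq. induction L as [|[s a] L IH]; [exact pseries_on_disc_one|].
  apply (pseries_on_disc_opiter (opR q) _ (pseries_on_disc_opR q Hq)).
  - apply (pseries_on_disc_opiter (opP q) _ (pseries_on_disc_opP q Hq));
      [now apply pseries_on_disc_yfun|reflexivity].
  - simpl. ring.
Qed.

Lemma is_Cseries_Gfun_1 q s a L : (Cmod q < 1)%R -> (a < s)%nat ->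
  is_Cseries (Gcoef q ((s, a) :: L)) (Gfun q ((s, a) :: L) 1).
Proof.
  intros Hq Has.
  assert (Hpred : (s - a = S (s - 1 - a))%nat) by lia.
  apply (is_Cseries_ext
           (fun n => Gcoef q (((s - 1)%nat, a) :: L) n * (q ^ n * / (1 - q ^ n)))).
  - intro n. simpl. rewrite Hpred. simpl. ring.
  - simpl. rewrite Hpred.
    apply (is_Cseries_opR_1 q Hq _ (Gcoef q (((s - 1)%nat, a) :: L))).
    + apply (pseries_on_disc_Gfun q (((s - 1)%nat, a) :: L) Hq).
    + apply Gcoef_cons_0.
Qed.

Definition zpair (p : nat * nat) : nat * nat := (fst p - snd p, fst p)%nat.

Lemma Gcoef_cons_S q s a L n : (Cmod q < 1)%R -> (a <= s)%nat ->
  Gcoef q ((s, a) :: L) (S n) = zterm q (S n) (s - a) s * fsum (S n) (Gcoef q L).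
Proof.
  intros Hq Has. cbn [Gcoef]. unfold zterm. rewrite Cpow_mult_r.
  pose proof (one_minus_qpow_neq0 q Hq (S n) ltac:(lia)) as Hx.
  set (x := 1 - q ^ S n). set (r := (s - a)%nat).
  replace s with (a + r)%nat by (unfold r; lia).
  rewrite Cpow_mult_l, !Cpow_inv, Cpow_add_r by exact Hx.
  field. split; apply Cpow_nz; exact Hx.
Qed.

Lemma fsum_Gcoef q L n : (Cmod q < 1)%R ->
  List.Forall (fun p : nat * nat => (snd p <= fst p)%nat) L ->
  fsum (S n) (Gcoef q L) = zfin q (S n) (map zpair L).
Proof.
  intros Hq HL. revert n. induction HL as [|[s a] L Has HL IH]; intro n.
  - induction n as [|n IHn]; simpl in *; [ring|]. rewrite IHn. ring.
  - rewrite fsum_shift. simpl (map _ _). simpl zfin.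
    rewrite Gcoef_cons_0, Cplus_0_l. apply fsum_ext.
    intros i _. rewrite Gcoef_cons_S, IH; auto.
Qed.

Lemma zfrak_pairs_Gfun q s a L : (Cmod q < 1)%R -> (a < s)%nat ->
  List.Forall (fun p : nat * nat => (snd p <= fst p)%nat) L ->
  zfrak_pairs q (map zpair ((s, a) :: L)) = Gfun q ((s, a) :: L) 1.
Proof.
  intros Hq Has HL. apply Csum_unique.
  apply (is_Cseries_ext (fun n => Gcoef q ((s, a) :: L) (S n))).
  - intro n. rewrite Gcoef_cons_S, fsum_Gcoef by (auto; lia). reflexivity.
  - apply (is_series_incr_1 (V := C_NormedModule) (Gcoef q ((s, a) :: L))).
    change (is_Cseries (Gcoef q ((s, a) :: L))
                       (Gfun q ((s, a) :: L) 1 + Gcoef q ((s, a) :: L) 0)).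
    rewrite Gcoef_cons_0, Cplus_0_r. now apply is_Cseries_Gfun_1.
Qed.

Lemma combine_subl (s a : list nat) : length a = length s ->
  combine (subl s a) s = map zpair (combine s a).
Proof.
  unfold subl. revert a.
  induction s as [|x s IH]; intros [|y a] Hlen; simpl in *; try lia; [reflexivity|].
  f_equal. apply IH. lia.
Qed.

Lemma Forall_combine_nth_le (s a : list nat) : length a = length s ->
  (forall j, (j < length s)%nat -> (nth j a 0 <= nth j s 0)%nat) ->
  List.Forall (fun p : nat * nat => (snd p <= fst p)%nat) (combine s a).
Proof.
  revert a.
  induction s as [|x s IH]; intros [|y a] Hlen Hle; simpl in *; try lia; constructor.
  - apply (Hle 0%nat). lia.
  - apply IH; [lia|]. intros j Hj. apply (Hle (S j)). lia.
Qed.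

Theorem theorem6p3 (q : C) (s a : list nat) :
  (Cmod q < 1)%R ->
  length a = length s ->
  (forall j, (j < length s)%nat -> (1 <= nth j s 0)%nat) ->
  (forall j, (j < length s)%nat -> (nth j a 0 <= nth j s 0)%nat) ->
  (forall j, (1 <= j <= length s)%nat ->
     (sumnat (firstn j a) < sumnat (firstn j s))%nat) ->
  zetaq q (subl s a) s = (1 - q) ^ (sumnat s) * Gfun q (combine s a) 1
  /\ zfrak q (subl s a) s = Gfun q (combine s a) 1.
Proof.
  intros Hq Hlen _ Hle Hprefix.
  assert (Hfrak : zfrak q (subl s a) s = Gfun q (combine s a) 1).
  { unfold zfrak. rewrite combine_subl by exact Hlen.
    pose proof (Forall_combine_nth_le s a Hlen Hle) as Hall.
    destruct s as [|s1 s], a as [|a1 a]; simpl in Hlen; try lia; [reflexivity|].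
    pose proof (Hprefix 1%nat ltac:(simpl; lia)) as Ha1. simpl in Ha1.
    inversion_clear Hall as [|? ? _ Hall_tail].
    apply zfrak_pairs_Gfun; [exact Hq|lia|exact Hall_tail]. }
  split; [|exact Hfrak]. unfold zetaq. now rewrite Hfrak.
Qed.
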